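(* There exist absolute constants $c_0>0$ and $n_0$ such that for every $n\ge n_0$ for which $\sqrt n$ is an even integer, there exist a read-once DNF formula $f:\{0,1\}^n\to\{0,1\}$ and a probability vector $p\in(0,1)^n$ such that, under unit costs ($c_i=1$ for all $i$), $$\mathsf{OPT}_{\mathcal N}(f,c,p)\ge c_0\sqrt{n}\cdot \mathsf{OPT}_{\mathcal A}(f,c,p).$$
   Context: Stochastic Boolean Function Evaluation (SBFE) setup: $f:\{0,1\}^n\to\{0,1\}$ is a known Boolean function, $c\in\mathbb{R}_{>0}^n$ a cost vector and $p\in(0,1)^n$ a probability vector. The unknown input $x\in\{0,1\}^n$ is random with independent coordinates and $\Pr(x_i=1)=p_i$. The value $x_i$ can only be learned by testing variable $i$, at cost $c_i$. A strategy tests variables sequentially until $f(x)$ is determined, i.e. until $f(x')=f(x)$ for every $x'$ agreeing with $x$ on all tested coordinates. An adaptive strategy is a decision tree (the next test may depend on previous outcomes); a non-adaptive strategy is a fixed permutation of $[n]$, with variables tested in that order until $f(x)$ is determined. $\mathrm{cost}_{c,p}(f,S)$ is the expected total cost of tests performed by $S$ for random $x$. $\mathsf{OPT}_{\mathcal A}(f,c,p)$ (resp. $\mathsf{OPT}_{\mathcal N}(f,c,p)$) is the minimum of $\mathrm{cost}_{c,p}(f,S)$ over all adaptive (resp. non-adaptive) strategies. A DNF formula is a disjunction of terms, each a conjunction of literals; it is read-once if no variable is negated and distinct terms contain disjoint sets of variables. *)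

From HB Require Import structures.
From mathcomp Require Import all_boot all_order all_algebra all_fingroup.
From mathcomp Require Import boolp classical_sets reals Rstruct.
From Stdlib Require Rdefinitions.
Notation R := Rdefinitions.R.

Set Implicit Arguments. Unset Strict Implicit. Unset Printing Implicit Defensive.
Import Order.TTheory GRing.Theory Num.Theory.
Local Open Scope ring_scope.
Local Open Scope classical_set_scope.

Notation input n := {ffun 'I_n -> bool}.

Definition prob (n : nat) (p : 'I_n -> R) (x : input n) : R :=
  \prod_(i < n) (if x i then p i else 1 - p i).

Definition determined (n : nat) (f : input n -> bool) (S : {set 'I_n}) (x : input n)
  : bool :=
  [forall y : input n, [forall i in S, y i == x i] ==> (f y == f x)].

(* Adaptive strategies: decision trees; a node tests a variable and branches
   on its value. *)
Inductive dtree (n : nat) : Type :=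
| Leaf : dtree n
| Node : 'I_n -> dtree n -> dtree n -> dtree n.

Fixpoint tcost (n : nat) (f : input n -> bool) (c : 'I_n -> R) (T : dtree n)
  (S : {set 'I_n}) (x : input n) : R :=
  if determined f S x then 0 else
  match T with
  | Leaf => 0
  | Node i t0 t1 => c i + tcost f c (if x i then t1 else t0) (i |: S) x
  end.

Fixpoint tvalid (n : nat) (f : input n -> bool) (T : dtree n)
  (S : {set 'I_n}) (x : input n) : bool :=
  determined f S x ||
  match T with
  | Leaf => false
  | Node i t0 t1 => tvalid f (if x i then t1 else t0) (i |: S) x
  end.

Definition adaptive_strategy (n : nat) (f : input n -> bool) (T : dtree n) : Prop :=
  forall x : input n, tvalid f T (finset.set0) x.

Definition costA (n : nat) (f : input n -> bool) (c p : 'I_n -> R) (T : dtree n) : R :=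
  \sum_(x : input n) prob p x * tcost f c T (finset.set0) x.

(* Non-adaptive strategy given by a permutation s: the k-th test (k = 0..n-1)
   is of variable s k, and it is performed iff f(x) is not determined by
   the first k tests. *)
Definition ncost (n : nat) (f : input n -> bool) (c : 'I_n -> R) (s : 'S_n)
  (x : input n) : R :=
  \sum_(k < n)
     (if determined f (s @: [set j : 'I_n | (j < k)%N]) x then 0 else c (s k)).

Definition costN (n : nat) (f : input n -> bool) (c p : 'I_n -> R) (s : 'S_n) : R :=
  \sum_(x : input n) prob p x * ncost f c s x.

(* Optimal costs (minima, written as infima over the sets of strategy costs) *)
Definition OPT_A (n : nat) (f : input n -> bool) (c p : 'I_n -> R) : R :=
  inf [set costA f c p T | T in [set T | adaptive_strategy f T]].

Definition OPT_N (n : nat) (f : input n -> bool) (c p : 'I_n -> R) : R :=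
  inf [set costN f c p s | s in [set: 'S_n]].

(* A monotone DNF given as a list of terms, each term a list of variables
   (all literals positive). *)
Definition dnf_eval (n : nat) (F : seq (seq 'I_n)) (x : input n) : bool :=
  has (fun t => all (fun i => x i) t) F.

(* Read-once DNF formula: at least one term, every term a nonempty
   conjunction, no variable occurring twice (in particular distinct terms
   have disjoint variable sets). *)
Definition read_once_dnf (n : nat) (F : seq (seq 'I_n)) : Prop :=
  F != [::] /\ all (fun t => t != [::]) F /\ uniq (flatten F).

From HB Require Import structures.
From mathcomp Require Import all_boot all_order all_algebra all_fingroup.
From mathcomp Require Import classical_sets reals Rstruct.
From mathcomp Require Import zify ring lra.
Import Order.TTheory GRing.Theory Num.Theory.
Set Implicit Arguments. Unset Strict Implicit. Unset Printing Implicit Defensive.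
Local Open Scope ring_scope.

(* The hard instance is the read-once DNF with M = sqrt n terms of M variables
   each, where the first variable of every term is 1 with probability
   q = 1/(2M) and every other variable with probability 1 - q.
   Adaptively, test the first variable of a term and the rest of the term only
   if it is 1: each term costs q M + (1 - q) <= 3/2 in expectation, so
   OPT_A <= 3M/2.
   Non-adaptively, with probability at least q/4 the input is a witness for
   term j: term j is true and every other term is falsified by its first
   variable.  On such an input f is undetermined until all variables of term j
   are tested, so each of them is paid for at its rank in the testing order.
   Averaging over the M variables of term j and summing over j, the ranks
   1, ..., n add up to about n^2/2, which gives OPT_N >= n/16 = M^2/16. *)

Lemma bernoulli_ineq (x : R) k : 0 <= x <= 1 -> 1 - k%:R * x <= (1 - x) ^+ k.
Proof.
move=> /andP[x0 x1]; elim: k => [|k IHk]; first by rewrite expr0 mul0r subr0.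
have hk : 0 <= (1 - x) ^+ k by apply: exprn_ge0; lra.
have hkx : 0 <= k%:R * x by apply: mulr_ge0.
rewrite exprS -natr1 mulrDl mul1r; nra.
Qed.

Lemma natr_forall (T : finType) (P : pred T) :
  [forall k, P k]%:R = \prod_k (P k)%:R :> R.
Proof.
have [/forallP allP|] := boolP [forall k, P k].
  by rewrite big1 // => k _; rewrite allP.
rewrite negb_forall => /existsP[k /negbTE Pk].
by rewrite (bigD1 k) //= Pk mul0r.
Qed.

Lemma sum_ord_succ n : (2 * \sum_(k < n) k.+1 = n * n.+1)%N.
Proof. by elim: n => [|n IHn]; rewrite ?big_ord0 // big_ord_recr mulnDr IHn /=; lia. Qed.

Section Expectation.
Variables (n : nat) (p : 'I_n -> R).

Lemma prob_ge0 x : (forall i, 0 <= p i <= 1) -> 0 <= prob p x.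
Proof.
by move=> p01; apply: prodr_ge0 => i _; have /andP[? ?] := p01 i; case: (x i); lra.
Qed.

Lemma expect_prod (h : 'I_n -> bool -> R) :
  \sum_(x : input n) prob p x * \prod_i h i (x i) =
  \prod_i (p i * h i true + (1 - p i) * h i false).
Proof.
transitivity (\prod_i \sum_(b : bool) (if b then p i else 1 - p i) * h i b).
  by rewrite bigA_distr_bigA /=; apply: eq_bigr => x _; rewrite -big_split.
by apply: eq_bigr => i _; rewrite big_bool.
Qed.

Lemma expect_if i (A B : R) :
  \sum_(x : input n) prob p x * (if x i then A else B) = p i * A + (1 - p i) * B.
Proof.
pose h k (b : bool) : R := if k == i then (if b then A else B) else 1.
have only_i (G : 'I_n -> R) : \prod_k (if k == i then G k else 1) = G i.
  by rewrite (bigD1 i) //= eqxx big1 ?mulr1 // => k /negbTE ->.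
transitivity (\sum_(x : input n) prob p x * \prod_k h k (x k)).
  by apply: eq_bigr => x _; rewrite /h only_i.
rewrite expect_prod -(only_i (fun k => p k * A + (1 - p k) * B)).
by apply: eq_bigr => k _; rewrite /h; case: eqP => // _; ring.
Qed.
End Expectation.

Definition unit_cost (n : nat) : 'I_n -> R := fun _ => 1.
Arguments unit_cost {n}.

Fixpoint path_length (n : nat) (x : input n) (T : dtree n) : nat :=
  if T is Node i t0 t1 then (path_length x (if x i then t1 else t0)).+1 else 0.

Section Strategies.
Variables (n : nat) (f : input n -> bool).

Lemma determinedP (S : {set 'I_n}) (x : input n) :
  reflect (forall y : input n, (forall i, i \in S -> y i = x i) -> f y = f x)
          (determined f S x).
Proof.
apply: (iffP forallP) => [det y yS | det y].
  by apply/eqP/(implyP (det y))/forall_inP => i /yS ->.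
by apply/implyP => /forall_inP yS; apply/eqP/det => i /yS /eqP.
Qed.

Lemma tcost_ge0 (c : 'I_n -> R) T S x :
  (forall i, 0 <= c i) -> 0 <= tcost f c T S x.
Proof.
move=> c0; elim: T S => [|i t0 IH0 t1 IH1] S /=; case: ifP => // _.
by apply: addr_ge0; case: (x i).
Qed.

Lemma tcost_le_path_length T (S : {set 'I_n}) (x : input n) :
  tcost f unit_cost T S x <= (path_length x T)%:R.
Proof.
elim: T S => [|i t0 IH0 t1 IH1] S /=; case: ifP => // _.
by rewrite -addn1 natrD addrC lerD2r; case: (x i).
Qed.

Lemma costA_ge0 (c p : 'I_n -> R) T :
  (forall i, 0 <= c i) -> (forall i, 0 <= p i <= 1) -> 0 <= costA f c p T.
Proof.
move=> c0 p01; apply: sumr_ge0 => x _.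
by apply: mulr_ge0; [apply: prob_ge0 | apply: tcost_ge0].
Qed.

Lemma OPT_A_le_costA (c p : 'I_n -> R) T :
  (forall i, 0 <= c i) -> (forall i, 0 <= p i <= 1) -> adaptive_strategy f T ->
  OPT_A f c p <= costA f c p T.
Proof.
move=> c0 p01 stratT; apply: ge_inf; last by exists T.
by exists 0 => _ [T' _ <-]; apply: costA_ge0.
Qed.

Lemma OPT_N_ge_lb (c p : 'I_n -> R) b :
  (forall s, b <= costN f c p s) -> b <= OPT_N f c p.
Proof.
by move=> lb; apply: lb_le_inf; [exists (costN f c p 1%g), 1%g | move=> _ [s _ <-]].
Qed.

Lemma ncost_ge0 (s : 'S_n) x : 0 <= ncost f unit_cost s x.
Proof. by apply: sumr_ge0 => k _; case: ifP. Qed.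

Lemma ncost_ge_rank (s : 'S_n) (x : input n) (i : 'I_n) :
  (forall S : {set 'I_n}, i \notin S -> ~~ determined f S x) ->
  ((s^-1)%g i).+1%:R <= ncost f unit_cost s x.
Proof.
move=> needs_i; set r := nat_of_ord ((s^-1)%g i).
have -> : ncost f unit_cost s x = \sum_(0 <= k < n)
    if determined f (s @: [set j : 'I_n | (j < k)%N]%classic) x then 0 else 1.
  by rewrite big_mkord.
rewrite (big_cat_nat _ (n := r.+1)) //=; last by rewrite ltn_ord.
rewrite (eq_big_nat _ _ (F2 := fun _ => 1)); last first.
  move=> k /andP[_ kr]; rewrite (negbTE (needs_i _ _)) //.
  rewrite -[i](permKV s) mem_imset; last exact: perm_inj.
  by apply/negP; rewrite in_setE /= -/r; lia.
rewrite sumr_const_nat subn0 lerDl.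
by apply: sumr_ge0 => k _; case: ifP.
Qed.
End Strategies.

Section MonotoneDNF.
Variables (n : nat) (F : seq (seq 'I_n)).
Local Notation f := (dnf_eval F).

Lemma determined_dnf_true (S : {set 'I_n}) (x : input n) t :
  t \in F -> (forall i, i \in t -> i \in S /\ x i) -> determined f S x.
Proof.
move=> tF tS; have all_t (y : input n) : (forall i, i \in S -> y i = x i) -> f y.
  by move=> yS; apply/hasP; exists t => //; apply/allP => i /tS[/yS -> ->].
by apply/determinedP => y yS; rewrite !all_t.
Qed.

Lemma determined_dnf_false (S : {set 'I_n}) (x : input n) :
  (forall t, t \in F -> exists i, [/\ i \in t, i \in S & ~~ x i]) -> determined f S x.
Proof.
move=> FS; have no_t (y : input n) : (forall i, i \in S -> y i = x i) -> ~~ f y.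
  move=> yS; apply/hasPn => t /FS[i [it iS xi]]; apply/allPn.
  by exists i; rewrite ?yS.
by apply/determinedP => y yS; rewrite (negbTE (no_t y yS)) (negbTE (no_t x _)).
Qed.

Fixpoint and_tree (u : seq 'I_n) (rest : dtree n) : dtree n :=
  if u is i :: u' then Node i rest (and_tree u' rest) else Leaf n.

Definition dnf_tree (G : seq (seq 'I_n)) : dtree n := foldr and_tree (Leaf n) G.

Lemma and_tree_valid t (u : seq 'I_n) rest (S : {set 'I_n}) (x : input n) :
  t \in F -> {subset u <= t} -> (forall i, i \in t -> i \notin u -> i \in S /\ x i) ->
  (forall S' : {set 'I_n}, S \subset S' -> (exists2 i, i \in t & i \in S' /\ ~~ x i) ->
     tvalid f rest S' x) ->
  tvalid f (and_tree u rest) S x.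
Proof.
move=> tF; elim: u S => [|i u IHu] S ut tS rest_valid /=.
  by rewrite (determined_dnf_true tF) // => i /tS; apply.
have SiS : S \subset i |: S by apply/fintype.subsetP => k kS; rewrite in_setU1 kS orbT.
apply/orP; right; case xi: (x i).
  apply: IHu => [k ku | k kt ku | S' /(fintype.subset_trans SiS)]; last exact: rest_valid.
    by apply: ut; rewrite in_cons ku orbT.
  have [->|ki] := eqVneq k i; first by rewrite setU11.
  by rewrite in_setU1 (negbTE ki); apply: tS; rewrite // in_cons negb_or ki.
apply: rest_valid => //; exists i; first by apply: ut; rewrite mem_head.
by rewrite setU11 xi.
Qed.

Lemma dnf_tree_valid G (S : {set 'I_n}) (x : input n) :
  {subset G <= F} ->
  (forall t, t \in F -> t \notin G -> exists i, [/\ i \in t, i \in S & ~~ x i]) ->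
  tvalid f (dnf_tree G) S x.
Proof.
elim: G S => [|t G IHG] S GF done_S /=.
  by rewrite determined_dnf_false // => t tF; apply: done_S.
apply: (and_tree_valid (GF t (mem_head t G))) => // [i it|S' SS' [i it [iS' xi]]].
  by rewrite it.
apply: IHG => [u uG | u uF uG]; first by apply: GF; rewrite in_cons uG orbT.
have [->|ut] := eqVneq u t; first by exists i.
have [k [ku kS xk]] : exists k, [/\ k \in u, k \in S & ~~ x k].
  by apply: done_S; rewrite // in_cons negb_or ut.
by exists k; split => //; apply: (fintype.subsetP SS').
Qed.

Lemma dnf_tree_strategy : adaptive_strategy f (dnf_tree F).
Proof. by move=> x; apply: dnf_tree_valid => // t ->. Qed.

(* A term whose first variable is false is abandoned after one test. *)
Lemma path_length_dnf_tree (x : input n) G :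
  (path_length x (dnf_tree G) <=
   \sum_(t <- G) if t is i :: _ then (if x i then size t else 1) else 0)%N.
Proof.
have and_tree_le u rest :
    (path_length x (and_tree u rest) <= size u + path_length x rest)%N.
  by elim: u => //= i u IHu; case: (x i) => //; lia.
elim: G => [|t G IHG]; rewrite ?big_nil ?big_cons //=.
case: t => [|i u] //=; case: (x i) => /=; last lia.
by have := and_tree_le u (dnf_tree G); lia.
Qed.
End MonotoneDNF.

Section Grid.
Variable m : nat.
Local Notation M := m.+1.
Local Notation N := (M * M)%N.

Lemma cell_subproof (j t : 'I_M) : (j * M + t < N)%N.
Proof. by have := ltn_ord j; have := ltn_ord t; nia. Qed.

Definition cell (jt : 'I_M * 'I_M) : 'I_N := Ordinal (cell_subproof jt.1 jt.2).

Lemma divn_cell_subproof (i : 'I_N) : (i %/ M < M)%N.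
Proof. by rewrite ltn_divLR. Qed.

Lemma modn_cell_subproof (i : 'I_N) : (i %% M < M)%N.
Proof. by rewrite ltn_pmod. Qed.

Definition uncell (i : 'I_N) : 'I_M * 'I_M :=
  (Ordinal (divn_cell_subproof i), Ordinal (modn_cell_subproof i)).

Lemma cellK : cancel cell uncell.
Proof.
move=> [j t]; congr (_, _); apply: val_inj => /=.
  by rewrite divnMDl // divn_small ?addn0.
by rewrite modnMDl modn_small.
Qed.

Lemma uncellK : cancel uncell cell.
Proof. by move=> i; apply: val_inj; rewrite /= -divn_eq. Qed.

Lemma cell_inj : injective cell. Proof. exact: can_inj cellK. Qed.

Lemma big_cell (T : Type) (idx : T) (op : Monoid.com_law idx) (G : 'I_N -> T) :
  \big[op/idx]_k G k = \big[op/idx]_(j < M) \big[op/idx]_(t < M) G (cell (j, t)).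
Proof.
rewrite pair_bigA (reindex cell) /=; last first.
  by exists uncell => i _; [apply: cellK | apply: uncellK].
by apply: eq_bigr => -[].
Qed.

Definition grid_dnf : seq (seq 'I_N) :=
  [seq [seq cell (j, t) | t <- enum 'I_M] | j <- enum 'I_M].

Local Notation f := (dnf_eval grid_dnf).

Lemma grid_dnfE (x : input N) : f x = [exists j, [forall t, x (cell (j, t))]].
Proof.
rewrite /dnf_eval has_map; apply/hasP/existsP => [[j _ /allP /= xj] | [j /forallP xj]].
  by exists j; apply/forallP => t; apply/xj/map_f; rewrite mem_enum.
by exists j; rewrite ?mem_enum //; apply/allP => _ /mapP[t _ ->].
Qed.

Lemma read_once_grid_dnf : read_once_dnf grid_dnf.
Proof.
have enum_neq0 : enum 'I_M != [::] by rewrite -size_eq0 size_enum_ord.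
split; first by rewrite /grid_dnf; case: (enum 'I_M) enum_neq0.
split; first by apply/allP => _ /mapP[j _ ->]; case: (enum 'I_M) enum_neq0.
by apply: allpairs_uniq; rewrite ?enum_uniq // => -[? ?] [? ?] _ _ /cell_inj.
Qed.

Definition head_prob : R := (2 * M%:R)^-1.
Local Notation q := head_prob.

Definition grid_prob (i : 'I_N) : R := if (uncell i).2 == ord0 then q else 1 - q.

Lemma head_prob_mulM : q * M%:R = 1 / 2.
Proof. by rewrite /head_prob; field; rewrite addrC natr1 pnatr_eq0. Qed.

Lemma head_prob_range : 0 < q <= 1 / 2.
Proof.
have M1 : 1 <= M%:R :> R by rewrite ler1n.
have q0 : 0 < q by rewrite invr_gt0; lra.
by rewrite q0 /=; have := head_prob_mulM; nra.
Qed.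

Lemma grid_prob_range i : 0 < grid_prob i < 1.
Proof.
by have := head_prob_range; rewrite /grid_prob; case: ifP => _ /andP[? ?]; apply/andP; lra.
Qed.

Lemma grid_prob01 i : 0 <= grid_prob i <= 1.
Proof. by have /andP[? ?] := grid_prob_range i; apply/andP; lra. Qed.

Lemma path_length_grid_tree (x : input N) :
  (path_length x (dnf_tree grid_dnf) <= \sum_(j < M) if x (cell (j, ord0)) then M else 1)%N.
Proof.
apply: leq_trans (path_length_dnf_tree x grid_dnf) _.
rewrite big_map big_enum /=; apply/eq_leq/eq_bigr => j _.
by rewrite size_map size_enum_ord enum_ordSl.
Qed.

(* Each term costs M with probability q and 1 otherwise: q M + (1 - q) <= 3/2. *)
Lemma costA_grid_tree : costA f unit_cost grid_prob (dnf_tree grid_dnf) <= 3 / 2 * M%:R.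
Proof.
apply: le_trans (_ : \sum_(x : input N) prob grid_prob x *
    \sum_(j < M) (if x (cell (j, ord0)) then M%:R else 1) <= _).
  apply: ler_sum => x _; apply: ler_wpM2l; first exact: prob_ge0 grid_prob01.
  apply: le_trans (tcost_le_path_length _ _ _ _) _.
  apply: le_trans (_ : (\sum_(j < M) if x (cell (j, ord0)) then M else 1)%N%:R <= _).
    by rewrite ler_nat path_length_grid_tree.
  by rewrite natr_sum; apply: ler_sum => j _; case: ifP.
under eq_bigr do rewrite mulr_sumr.
rewrite exchange_big /= -[M in 3 / 2 * M%:R]card_ord mulr_natr -sumr_const.
apply: ler_sum => j _; rewrite expect_if /grid_prob cellK eqxx.
by have := head_prob_mulM; have := head_prob_range; lra.
Qed.

Lemma OPT_A_grid_le : OPT_A f unit_cost grid_prob <= 3 / 2 * M%:R.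
Proof.
apply: le_trans costA_grid_tree; apply: OPT_A_le_costA grid_prob01 (dnf_tree_strategy _).
by move=> i; rewrite /unit_cost.
Qed.

Lemma prod_ord_single (i0 : 'I_M) (A B : R) :
  \prod_(i < M) (if i == i0 then A else B) = A * B ^+ m.
Proof.
rewrite (bigD1 i0) //= eqxx (eq_bigr (fun _ => B)) => [|i /negbTE -> //].
by rewrite prodr_const cardC1 card_ord.
Qed.

(* Term j is true and every other term is falsified by its first variable;
   written as a condition on each variable separately so that its probability
   factorises (expect_prod). *)
Definition witness (j : 'I_M) (x : input N) : bool :=
  [forall k, if (uncell k).1 == j then x k else ((uncell k).2 == ord0) ==> ~~ x k].

Lemma witness_term j t x : witness j x -> x (cell (j, t)).
Proof. by move=> /forallP/(_ (cell (j, t))); rewrite cellK eqxx. Qed.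

Lemma witness_other j j' x : witness j x -> j' != j -> ~~ x (cell (j', ord0)).
Proof. by move=> /forallP/(_ (cell (j', ord0))) + /negbTE ne; rewrite cellK /= ne. Qed.

Lemma witness_uniq j j' x : witness j x -> witness j' x -> j' = j.
Proof.
move=> wj wj'; have [//|ne] := eqVneq j' j.
by have := witness_other wj ne; rewrite (witness_term ord0 wj').
Qed.

Lemma witness_undetermined j t x (S : {set 'I_N}) :
  witness j x -> cell (j, t) \notin S -> ~~ determined f S x.
Proof.
move=> wj tS; apply/negP => /determinedP det.
pose y : input N := [ffun k => (k != cell (j, t)) && x k].
have fx : f x.
  by rewrite grid_dnfE; apply/existsP; exists j; apply/forallP => t'; apply: witness_term wj.
have /negP[] : ~~ f y.
  rewrite grid_dnfE negb_exists; apply/forallP => j'; rewrite negb_forall; apply/existsP.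
  have [->|ne] := eqVneq j' j; first by exists t; rewrite ffunE eqxx.
  by exists ord0; rewrite ffunE (negbTE (witness_other wj ne)) andbF.
rewrite det // => k kS; rewrite ffunE; case: eqP => [kt|_] //.
by move: tS; rewrite -kt kS.
Qed.

Definition rank_sum (s : 'S_N) (j : 'I_M) : R :=
  \sum_(t < M) ((s^-1)%g (cell (j, t))).+1%:R.

Lemma ncost_witness (s : 'S_N) x :
  \sum_(j < M) (witness j x)%:R * rank_sum s j <= M%:R * ncost f unit_cost s x.
Proof.
have [j wj|no_witness] := pickP (fun j => witness j x); last first.
  rewrite big1 => [|j _]; last by rewrite no_witness mul0r.
  by apply: mulr_ge0 => //; apply: ncost_ge0.
rewrite (bigD1 j) //= big1 ?addr0 => [|j' ne]; last first.
  case wj': (witness j' x); last by rewrite mul0r.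
  by rewrite (witness_uniq wj wj') eqxx in ne.
rewrite wj mul1r /rank_sum mulr_natl -[M in _ *+ M]card_ord -sumr_const.
by apply: ler_sum => t _; apply: ncost_ge_rank => S; apply: witness_undetermined.
Qed.

Lemma sum_rank_sum (s : 'S_N) : 2 * \sum_(j < M) rank_sum s j = (N * N.+1)%:R.
Proof.
rewrite /rank_sum -(big_cell _ (fun k => ((s^-1)%g k).+1%:R)).
rewrite (reindex_inj (@perm_inj _ s)) /= (eq_bigr (fun k : 'I_N => k.+1%:R)).
  by rewrite -natr_sum -natrM sum_ord_succ.
by move=> k _; rewrite permK.
Qed.

Lemma expect_witness j :
  \sum_(x : input N) prob grid_prob x * (witness j x)%:R = q * (1 - q) ^+ m * (1 - q) ^+ m.
Proof.
under eq_bigr do rewrite natr_forall.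
rewrite (expect_prod _ (fun k b =>
  (if (uncell k).1 == j then b else ((uncell k).2 == ord0) ==> ~~ b)%:R)).
rewrite big_cell -(prod_ord_single j); apply: eq_bigr => j' _.
rewrite /grid_prob; under eq_bigr do rewrite cellK /=.
case: eqP => _.
  rewrite -(prod_ord_single ord0); apply: eq_bigr => t _; case: ifP => _ /=; ring.
rewrite [RHS](_ : _ = (1 - q) * 1 ^+ m); last by rewrite expr1n mulr1.
rewrite -(prod_ord_single ord0).
by apply: eq_bigr => t _; case: ifP => _ /=; ring.
Qed.

Lemma expect_witness_ge j : q / 4 <= \sum_(x : input N) prob grid_prob x * (witness j x)%:R.
Proof.
have /andP[q0 q_le] := head_prob_range.
have half_le : 1 / 2 <= (1 - q) ^+ m.
  apply: le_trans (bernoulli_ineq m (_ : 0 <= q <= 1)); last by apply/andP; lra.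
  have : m%:R * q <= M%:R * q by apply: ler_wpM2r; [exact: ltW | rewrite ler_nat].
  by rewrite [M%:R * q]mulrC head_prob_mulM; lra.
have quarter_le : 1 / 4 <= (1 - q) ^+ m * (1 - q) ^+ m by nra.
by rewrite expect_witness -mulrA; nra.
Qed.

Lemma costN_grid_ge (s : 'S_N) : M%:R ^+ 2 / 16 <= costN f unit_cost grid_prob s.
Proof.
have M0 : 0 < M%:R :> R by rewrite ltr0n.
rewrite -(ler_pM2l M0); apply: le_trans (_ : q / 4 * \sum_(j < M) rank_sum s j <= _).
  have N_ge : M%:R ^+ 4 <= 2 * \sum_(j < M) rank_sum s j.
    by rewrite sum_rank_sum natrM -natr1 natrM; nra.
  have /andP[q0 _] := head_prob_range.
  apply: le_trans (_ : q / 4 * (M%:R ^+ 4 / 2) <= _); last by rewrite ler_wpM2l; lra.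
  have -> : q / 4 * (M%:R ^+ 4 / 2) = q * M%:R * (M%:R * (M%:R ^+ 2 / 16)) * 2 by field.
  by rewrite head_prob_mulM; lra.
apply: le_trans (_ : \sum_(x : input N) prob grid_prob x *
    \sum_(j < M) (witness j x)%:R * rank_sum s j <= _).
  under [X in _ <= X]eq_bigr do rewrite mulr_sumr.
  rewrite [X in X <= _]mulr_sumr [X in _ <= X]exchange_big /=; apply: ler_sum => j _.
  under [X in _ <= X]eq_bigr do rewrite mulrA.
  rewrite -mulr_suml ler_wpM2r ?expect_witness_ge //.
  by apply: sumr_ge0 => t _; apply: ler0n.
rewrite /costN mulr_sumr; apply: ler_sum => x _; rewrite mulrCA.
by apply: ler_wpM2l; [apply: prob_ge0 grid_prob01 | apply: ncost_witness].
Qed.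

Lemma OPT_N_grid_ge : M%:R ^+ 2 / 16 <= OPT_N f unit_cost grid_prob.
Proof. exact: OPT_N_ge_lb costN_grid_ge. Qed.
End Grid.

Theorem theorem4 :
  exists (c0 : R) (n0 : nat), 0 < c0 /\
    forall n : nat, (n0 <= n)%N -> (exists k : nat, n = ((2 * k) ^ 2)%N) ->
      exists (F : seq (seq 'I_n)) (p : 'I_n -> R),
        read_once_dnf F /\ (forall i, 0 < p i < 1) /\
        c0 * Num.sqrt (n%:R) * OPT_A (dnf_eval F) (fun _ => 1) p
          <= OPT_N (dnf_eval F) (fun _ => 1) p.
Proof.
exists (1 / 24), 1%N; split => [|n n_ge [k n_sq]]; first lra.
have [m ->] : exists m, n = (m.+1 * m.+1)%N.
  by exists (2 * k).-1; move: n_ge; rewrite n_sq; case: k {n_sq}.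
exists (@grid_dnf m), (@grid_prob m); split; first exact: read_once_grid_dnf.
split; first exact: grid_prob_range.
rewrite natrM sqrtr_sqr ger0_norm ?ler0n //.
apply: le_trans (@OPT_N_grid_ge m).
apply: le_trans (_ : 1 / 24 * m.+1%:R * (3 / 2 * m.+1%:R) <= _); last lra.
by rewrite ler_wpM2l ?OPT_A_grid_le // mulr_ge0 ?ler0n //; lra.
Qed.
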